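(* Let $S$ be an inverse monoid and $\mathcal M$ a finite quasi-generating set for $S$. Then the action of $S$ on the presheaf of geodesic metric spaces $(S,d_{\mathcal M})$ over $E(S)$ (with projection $s\mapsto s^{-1}s$ and action given by right multiplication) is proper and cobounded.
   Context: An inverse monoid is a monoid $S$ (identity $1$) in which every $s$ has a unique $s^{-1}$ with $ss^{-1}s=s$, $s^{-1}ss^{-1}=s^{-1}$. $E(S)$ is its set of idempotents. Green's relation $\mathcal L$: $(s,t)\in\mathcal L$ iff $s^{-1}s=t^{-1}t$. A quasi-generating set is a subset $\mathcal M=\mathcal M^{-1}\subseteq S$ such that $S$ is generated as a semigroup by $\mathcal M\cup E(S)$. The Cayley metric: $d_{\mathcal M}(s,t)=\infty$ if $(s,t)\notin\mathcal L$, and otherwise the path distance from $s$ to $t$ in the graph on the $\mathcal L$-class of $s$ with $u,v$ joined by an edge of length 1 whenever $gu=v$ for some $g\in\mathcal M$. This makes $S$ a presheaf of metric spaces over $E(S)$: projection $p(s)=s^{-1}s$, fiber over $e$ the $\mathcal L$-class $\{s: s^{-1}s=e\}$, and $S$ acts on it by right multiplication. For an inverse monoid $S$ acting (on the right) on a presheaf of metric spaces $X$ over $E(S)$ with fibers $X_e$ and extended metric $d$ (infinite between different fibers): the action is proper if for every $y_1\in X_1$ and $R\ge0$ there is a finite $\mathcal C\subseteq S$ with $\{s\in S: d(y_1\cdot s, y_1\cdot s^{-1}s)\le R\}\subseteq\{ce: c\in\mathcal C, e\in E(S)\}$; it is cobounded if there exist $x_1\in X_1$ and $T\ge0$ such that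 every point of $X$ is of the form $y\cdot s$ with $s\in S$ and $d(x_1,y)\le T$. *)

From Stdlib Require Import Reals List.
From Coquelicot Require Import Coquelicot.
Open Scope R_scope.

Record inverse_monoid := InverseMonoid {
  im_carrier :> Type;
  im_mul : im_carrier -> im_carrier -> im_carrier;
  im_one : im_carrier;
  im_inv : im_carrier -> im_carrier;
  im_mulA : forall a b c, im_mul a (im_mul b c) = im_mul (im_mul a b) c;
  im_mul1s : forall a, im_mul im_one a = a;
  im_muls1 : forall a, im_mul a im_one = a;
  im_inv1 : forall s, im_mul (im_mul s (im_inv s)) s = s;
  im_inv2 : forall s, im_mul (im_mul (im_inv s) s) (im_inv s) = im_inv s;
  im_inv_uniq : forall s t, im_mul (im_mul s t) s = s ->
                  im_mul (im_mul t s) t = t -> t = im_inv s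
}.

Arguments im_mul {_}.
Arguments im_one {_}.
Arguments im_inv {_}.

Section InverseMonoidDefs.
Variable IM : inverse_monoid.

Definition idempotent (e : IM) : Prop := im_mul e e = e.

Definition greenL (s t : IM) : Prop :=
  im_mul (im_inv s) s = im_mul (im_inv t) t.

Inductive sgen (P : IM -> Prop) : IM -> Prop :=
| sgen_base : forall x, P x -> sgen P x
| sgen_mul : forall x y, sgen P x -> sgen P y -> sgen P (im_mul x y).

Definition quasi_generating (M : list IM) : Prop :=
  (forall g, In g M -> In (im_inv g) M) /\
  (forall s, sgen (fun x => In x M \/ idempotent x) s).

Definition cayley_edge (M : list IM) (u v : IM) : Prop :=
  exists g, In g M /\ (im_mul g u = v \/ im_mul g v = u).

Inductive cayley_path (M : list IM) (c : IM) : IM -> IM -> nat -> Prop :=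
| cpath_nil : forall u, greenL c u -> cayley_path M c u u 0
| cpath_cons : forall u v w n, greenL c u -> cayley_edge M u v ->
    cayley_path M c v w n -> cayley_path M c u w (Datatypes.S n).

(** The Cayley metric d_M: infinite if (s,t) not in L, otherwise the
    path distance in the graph on the L-class of s. *)
Definition cayley_dist (M : list IM) (s t : IM) : Rbar :=
  Glb_Rbar (fun r => greenL s t /\
     exists n : nat, r = INR n /\ cayley_path M s s t n).

End InverseMonoidDefs.

Arguments idempotent {_}.
Arguments greenL {_}.
Arguments quasi_generating {_}.
Arguments cayley_dist {_}.

(** Right action of S on a presheaf of metric spaces X over E(S), given by
    projection p : X -> S (with values in E(S)), action act and extended
    metric d (infinite between different fibers). *)
Definition action_proper (S : inverse_monoid) (X : Type) (p : X -> S)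
    (act : X -> S -> X) (d : X -> X -> Rbar) : Prop :=
  forall (y1 : X), p y1 = im_one -> forall R : R, 0 <= R ->
  exists C : list S, forall s : S,
    Rbar_le (d (act y1 s) (act y1 (im_mul (im_inv s) s))) (Finite R) ->
    exists c e, In c C /\ idempotent e /\ s = im_mul c e.

Definition action_cobounded (S : inverse_monoid) (X : Type) (p : X -> S)
    (act : X -> S -> X) (d : X -> X -> Rbar) : Prop :=
  exists x1 : X, p x1 = im_one /\
  exists T : R, 0 <= T /\
  forall x : X, exists (y : X) (s : S), x = act y s /\ Rbar_le (d x1 y) (Finite T).

Definition self_proj (S : inverse_monoid) (s : S) : S := im_mul (im_inv s) s.
Definition self_act (S : inverse_monoid) (s t : S) : S := im_mul s t.

(** Properness only needs finiteness of [M]: a path of length [n] from [u] to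
    [w] in the Cayley graph of an L-class exhibits [u = k w] for a word [k] of
    length at most [n] in [M] (edges may be traversed backwards because
    [g u = v] with [u] L [v] forces [g^-1 v = u]).  If [y1] lies over [1] and
    [d(y1 s, y1 s^-1 s) <= R], this gives [y1 s = k y1 s^-1 s], hence
    [s = (y1^-1 k y1) (s^-1 s)] with [k] ranging over the finitely many words
    of length at most [R].  Coboundedness is witnessed by [x1 = y = 1],
    [T = 0], since every [s] equals [1 s]. *)

From Stdlib Require Import Reals List.
From Coquelicot Require Import Coquelicot.
From Stdlib Require Import Classical Lia Lra.

Lemma Glb_Rbar_le_ex_lt (E : R -> Prop) (r r' : R) :
  Rbar_le (Glb_Rbar E) (Finite r) -> r < r' -> exists x, E x /\ x < r'.
Proof.
  intros Hglb Hrr'.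
  apply NNPP; intros Hnone.
  assert (Hlb : is_lb_Rbar E (Finite r')).
  { intros x Ex. simpl. apply Rnot_lt_le. intros Hx. apply Hnone. now exists x. }
  pose proof (Rbar_le_trans _ _ _ (proj2 (Glb_Rbar_correct E) _ Hlb) Hglb).
  simpl in *. lra.
Qed.

Section InverseMonoidTheory.

Variable S : inverse_monoid.
Local Notation "a * b" := (@im_mul S a b).
Local Notation "s ^-1" := (@im_inv S s) (at level 2, format "s ^-1").
Local Notation one := (@im_one S).

Lemma im_invK (s : S) : s^-1^-1 = s.
Proof. symmetry. apply im_inv_uniq; [apply im_inv2 | apply im_inv1]. Qed.

Lemma idempotent_inv (e : S) : idempotent e -> e^-1 = e.
Proof. intros He. symmetry. apply im_inv_uniq; rewrite He; exact He. Qed.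

Lemma idempotent_mulr (e x : S) : idempotent e -> x * e * e = x * e.
Proof. intros He. now rewrite <- im_mulA, He. Qed.

Lemma idempotent_mul (e f : S) :
  idempotent e -> idempotent f -> idempotent (e * f).
Proof.
  intros He Hf. set (x := (e * f)^-1).
  assert (Hefx : e * f * x * (e * f) = e * f) by apply im_inv1.
  assert (Hxef : x * (e * f) * x = x) by apply im_inv2.
  rewrite !im_mulA in Hefx, Hxef.
  assert (Hfxe : f * x * e = x).
  { apply im_inv_uniq; fold x; rewrite !im_mulA.
    - now rewrite (idempotent_mulr f _ Hf), (idempotent_mulr e _ He).
    - rewrite (idempotent_mulr e _ He), (idempotent_mulr f _ Hf).
      replace (f * x * e * f * x * e) with (f * (x * e * f * x) * e)
        by now rewrite !im_mulA.
      now rewrite Hxef. }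
  (* [x = f x e] exhibits [x] as an idempotent, and so is its inverse [e f]. *)
  assert (Hx : idempotent x).
  { unfold idempotent. rewrite <- Hfxe at 1 2.
    replace (f * x * e * (f * x * e)) with (f * (x * e * f * x) * e)
      by now rewrite !im_mulA.
    now rewrite Hxef. }
  assert (Hefx' : e * f = x).
  { rewrite <- (im_invK (e * f)). now apply idempotent_inv. }
  now rewrite Hefx'.
Qed.

Lemma idempotent_comm (e f : S) :
  idempotent e -> idempotent f -> e * f = f * e.
Proof.
  intros He Hf.
  rewrite <- (idempotent_inv _ (idempotent_mul e f He Hf)).
  symmetry. apply im_inv_uniq.
  - replace (e * f * (f * e) * (e * f)) with (e * (f * f) * (e * e) * f)
      by now rewrite !im_mulA.
    rewrite He, Hf, <- im_mulA. exact (idempotent_mul e f He Hf).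
  - replace (f * e * (e * f) * (f * e)) with (f * (e * e) * (f * f) * e)
      by now rewrite !im_mulA.
    rewrite He, Hf, <- im_mulA. exact (idempotent_mul f e Hf He).
Qed.

Lemma idempotent_inv_mul (s : S) : idempotent (s^-1 * s).
Proof. unfold idempotent. now rewrite im_mulA, im_inv2. Qed.

Lemma idempotent_mul_inv (s : S) : idempotent (s * s^-1).
Proof. unfold idempotent. now rewrite im_mulA, im_inv1. Qed.

Lemma im_inv_mul (a b : S) : (a * b)^-1 = b^-1 * a^-1.
Proof.
  symmetry. apply im_inv_uniq.
  - replace (a * b * (b^-1 * a^-1) * (a * b))
      with (a * ((b * b^-1) * (a^-1 * a)) * b) by now rewrite !im_mulA.
    rewrite (idempotent_comm _ _ (idempotent_mul_inv b) (idempotent_inv_mul a)).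
    replace (a * (a^-1 * a * (b * b^-1)) * b)
      with ((a * a^-1 * a) * (b * b^-1 * b)) by now rewrite !im_mulA.
    now rewrite !im_inv1.
  - replace (b^-1 * a^-1 * (a * b) * (b^-1 * a^-1))
      with (b^-1 * ((a^-1 * a) * (b * b^-1)) * a^-1) by now rewrite !im_mulA.
    rewrite (idempotent_comm _ _ (idempotent_inv_mul a) (idempotent_mul_inv b)).
    replace (b^-1 * (b * b^-1 * (a^-1 * a)) * a^-1)
      with ((b^-1 * b * b^-1) * (a^-1 * a * a^-1)) by now rewrite !im_mulA.
    now rewrite !im_inv2.
Qed.

Lemma im_inv_one : one^-1 = one.
Proof. apply idempotent_inv. apply im_mul1s. Qed.

(* [u = u (u^-1 u) = u (v^-1 v) = (u u^-1)(g^-1 g) u], then commute the idempotents. *)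
Lemma greenL_mul_invK (g u v : S) : greenL u v -> g * u = v -> g^-1 * v = u.
Proof.
  unfold greenL. intros Huv Hv.
  transitivity (u * (u^-1 * u)); [| now rewrite im_mulA, im_inv1].
  rewrite Huv, <- Hv, im_inv_mul.
  replace (u * (u^-1 * g^-1 * (g * u))) with ((u * u^-1) * (g^-1 * g) * u)
    by now rewrite !im_mulA.
  rewrite (idempotent_comm _ _ (idempotent_mul_inv u) (idempotent_inv_mul g)).
  replace (g^-1 * g * (u * u^-1) * u) with (g^-1 * (g * (u * u^-1 * u)))
    by now rewrite !im_mulA.
  now rewrite im_inv1.
Qed.

Section CayleyGraph.

Variable M : list S.

Fixpoint word_ball (n : nat) : list S :=
  match n with
  | O => one :: nil
  | Datatypes.S n =>
      word_ball n ++ flat_map (fun g => map (fun k => g * k) (word_ball n)) M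
  end.

Lemma word_ball_mono (n m : nat) (k : S) :
  (n <= m)%nat -> In k (word_ball n) -> In k (word_ball m).
Proof. induction 1; auto. intros Hk. simpl. apply in_or_app. auto. Qed.

Lemma word_ball_mul (n : nat) (g k : S) :
  In g M -> In k (word_ball n) -> In (g * k) (word_ball (Datatypes.S n)).
Proof.
  intros Hg Hk. simpl. apply in_or_app. right.
  apply in_flat_map. exists g. split; auto. now apply in_map.
Qed.

Lemma cayley_path_greenL (c u w : S) (n : nat) :
  cayley_path S M c u w n -> greenL c u.
Proof. now destruct 1. Qed.

Hypothesis M_inv : forall g, In g M -> In (g^-1) M.

Lemma cayley_path_word (c u w : S) (n : nat) :
  cayley_path S M c u w n -> exists k, In k (word_ball n) /\ u = k * w.
Proof.
  induction 1 as [u Hu | u v w n Hu Huv Hp IH].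
  - exists one. split; [now left | symmetry; apply im_mul1s].
  - destruct IH as [k [Hk Hvk]].
    destruct Huv as [g [Hg [Hgu | Hgv]]].
    + exists (g^-1 * k). split; [apply word_ball_mul; [apply M_inv |]; assumption |].
      assert (HLuv : greenL u v).
      { pose proof (cayley_path_greenL _ _ _ _ Hp). unfold greenL in *. congruence. }
      rewrite <- (greenL_mul_invK g u v HLuv Hgu), Hvk. apply im_mulA.
    + exists (g * k). split; [now apply word_ball_mul |].
      rewrite <- Hgv, Hvk. apply im_mulA.
Qed.

Lemma cayley_dist_le_word (u w : S) (r : R) (N : nat) :
  Rbar_le (cayley_dist M u w) (Finite r) -> r < INR N + 1 ->
  exists k, In k (word_ball N) /\ u = k * w.
Proof.
  intros Hd HrN.
  destruct (Glb_Rbar_le_ex_lt _ _ _ Hd HrN) as [x [[_ [n [-> Hp]]] Hn]].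
  destruct (cayley_path_word _ _ _ _ Hp) as [k [Hk Hu]].
  exists k. split; [| exact Hu].
  apply (word_ball_mono n); [| exact Hk].
  rewrite <- S_INR in Hn. apply INR_lt in Hn. lia.
Qed.

End CayleyGraph.

Lemma cayley_dist_diag (M : list S) (s : S) : cayley_dist M s s = Finite 0.
Proof.
  apply is_glb_Rbar_unique. split.
  - intros x [_ [n [-> _]]]. apply pos_INR.
  - intros l Hl. apply Hl. split; [reflexivity |].
    exists O. split; [reflexivity |]. now constructor.
Qed.

End InverseMonoidTheory.

Lemma cayley_action_proper (S : inverse_monoid) (M : list S) :
  (forall g, In g M -> In (im_inv g) M) ->
  action_proper S S (self_proj S) (self_act S) (cayley_dist M).
Proof.
  unfold action_proper, self_proj, self_act.
  intros M_inv y1 Hy1 R HR.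
  destruct (nfloor_ex R HR) as [N [_ HN]].
  exists (map (fun k => im_mul (im_mul (im_inv y1) k) y1) (word_ball S M N)).
  intros s Hd.
  destruct (cayley_dist_le_word S M M_inv _ _ _ _ Hd HN) as [k [Hk Hs]].
  exists (im_mul (im_mul (im_inv y1) k) y1), (im_mul (im_inv s) s).
  split; [apply in_map_iff; now exists k | split; [apply idempotent_inv_mul |]].
  rewrite <- !im_mulA, <- Hs, im_mulA, Hy1. symmetry. apply im_mul1s.
Qed.

Lemma cayley_action_cobounded (S : inverse_monoid) (M : list S) :
  action_cobounded S S (self_proj S) (self_act S) (cayley_dist M).
Proof.
  unfold action_cobounded, self_proj, self_act.
  exists im_one. split; [rewrite im_inv_one; apply im_mul1s |].
  exists 0. split; [apply Rle_refl |].
  intros x. exists im_one, x. split; [symmetry; apply im_mul1s |].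
  rewrite cayley_dist_diag. apply Rle_refl.
Qed.

Theorem lemma2p3 (S : inverse_monoid) (M : list S) :
  quasi_generating M ->
  action_proper S S (self_proj S) (self_act S) (cayley_dist M) /\
  action_cobounded S S (self_proj S) (self_act S) (cayley_dist M).
Proof.
  intros [M_inv _]. split.
  - now apply cayley_action_proper.
  - apply cayley_action_cobounded.
Qed.
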